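(* (a) For $\mathbf{a}=(a_1,\dots,a_k)\in\mathbb{N}^k$, $$L^{(k+1)}(\mathbf{a})\le\min\left\{\tau_{k+1}(\mathbf{a})(\log2)^k,\ \prod_{i=1}^k(\log a_1+\cdots+\log a_i+\log2)\right\}.$$ (b) If $\mathbf{a},\mathbf{b}\in\mathbb{N}^k$ and $\gcd(a_1\cdots a_k,b_1\cdots b_k)=1$, then $L^{(k+1)}(a_1b_1,\dots,a_kb_k)\le\tau_{k+1}(\mathbf{a})L^{(k+1)}(\mathbf{b})$.
   Context: For $\mathbf{a}\in\mathbb{N}^k$, $L^{(k+1)}(\mathbf{a})$ is the $k$-dimensional Lebesgue measure of $\bigcup[\log(d_1/2),\log d_1)\times\cdots\times[\log(d_k/2),\log d_k)$, the union over all $(d_1,\dots,d_k)\in\mathbb{N}^k$ with $d_1\cdots d_i\mid a_1\cdots a_i$ for $1\le i\le k$. $\tau_{k+1}(\mathbf{a})=|\{(d_1,\dots,d_k)\in\mathbb{N}^k: d_1\cdots d_i\mid a_1\cdots a_i\ (1\le i\le k)\}|$. *)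

From HB Require Import structures.
From mathcomp Require Import all_boot all_order all_algebra.
From mathcomp Require Import all_classical all_reals all_analysis.
Set Implicit Arguments. Unset Strict Implicit. Unset Printing Implicit Defensive.
Import Order.TTheory GRing.Theory Num.Theory.
Local Open Scope classical_set_scope.
Local Open Scope ring_scope.

Section Defs.
Variable R : realType.

(* points of R^k are represented as x : nat -> R, coordinate i (i < k) is x i;
   coordinates >= k are irrelevant (set to 0 by the base point of the
   iterated integral). *)
Definition upd (x : nat -> R) (n : nat) (t : R) : nat -> R :=
  fun i => if i == n then t else x i.

Fixpoint iter_int (n : nat) (f : (nat -> R) -> \bar R) (x : nat -> R) : \bar R :=
  match n with
  | 0 => f x
  | m.+1 => (\int[lebesgue_measure]_(t in [set: R]) iter_int m f (upd x m t))%E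
  end.

Definition lebesgue_k (k : nat) (S : set (nat -> R)) : \bar R :=
  iter_int k (fun x => (\1_S x)%:E) (fun _ => 0).

End Defs.

Definition divcond (k : nat) (a d : 'I_k -> nat) : Prop :=
  (forall i : 'I_k, (0 < d i)%N) /\
  (forall i : 'I_k, (\prod_(j < k | j <= i) d j %| \prod_(j < k | j <= i) a j)%N).

(* tau_{k+1}(a): number of admissible d.  For a in N^k (positive entries) every
   admissible d satisfies d_i <= a_1...a_k, so the count over this finite box is
   the count over all of N^k. *)
Definition tau (k : nat) (a : 'I_k -> nat) : nat :=
  #|[set d : {ffun 'I_k -> 'I_(\prod_(j < k) a j)%N.+1} |
       `[< divcond a (fun i => nat_of_ord (d i)) >] ]|.

Definition Lset (R : realType) (k : nat) (a : 'I_k -> nat) : set (nat -> R) :=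
  [set x | exists d : 'I_k -> nat, divcond a d /\
     forall i : 'I_k, ln ((d i)%:R / 2) <= x i < ln (d i)%:R].

Definition Lk (R : realType) (k : nat) (a : 'I_k -> nat) : \bar R :=
  lebesgue_k k (@Lset R k a).
Arguments Lk R {k} a.
Arguments Lset R {k} a.

From HB Require Import structures.
From mathcomp Require Import all_boot all_order all_algebra.
From mathcomp Require Import all_classical all_reals all_analysis.
From mathcomp Require Import ring lra.
Import Order.TTheory GRing.Theory Num.Theory.
Local Open Scope classical_set_scope.
Local Open Scope ring_scope.
Import measurable_realfun.
Set Implicit Arguments. Unset Strict Implicit.

(* Each bound compares the indicator of the union of boxes defining L pointwise
   with a finite sum of indicators of boxes.  The iterated integral of such a
   sum is exactly the sum of the volumes of the boxes, so the measurability of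
   the union never has to be established.  For (a) the boxes are the tau(a)
   boxes of side log 2 themselves, or the single box with sides
   [-log 2, log(a_1 ... a_i)).  For (b) the union for b is first cut into
   disjoint boxes, whose volumes then add up to L(b). *)

Section Boxes.
Variable R : realType.
Local Notation mu := (@lebesgue_measure R).

Definition itv_ind (l r t : R) : R := ((l <= t) && (t < r))%:R.
Definition itv_len (l r : R) : R := Num.max (r - l) 0.

Lemma itv_ind_ge0 l r t : 0 <= itv_ind l r t.
Proof. by rewrite /itv_ind ler0n. Qed.

Lemma itv_len_ge0 l r : 0 <= itv_len l r.
Proof. by rewrite /itv_len le_max lexx orbT. Qed.

Lemma itv_indE l r t : itv_ind l r t = \1_(`[l, r[%classic) t.
Proof. by rewrite indicE mem_setE in_itv. Qed.

(* No measurability is needed: a nonnegative integral is the supremum of the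
   integrals of the simple functions below the integrand. *)
Lemma ge0_le_integralT (f g : R -> \bar R) :
  (forall t, (0 <= f t)%E) -> (forall t, (f t <= g t)%E) ->
  (\int[mu]_(t in setT) f t <= \int[mu]_(t in setT) g t)%E.
Proof.
move=> f0 fg; have g0 t : (0 <= g t)%E by exact: le_trans (f0 t) (fg t).
rewrite !ge0_integralTE //; apply: ereal_sup_le => _ [h hf <-]; exists h => //= x.
exact: le_trans (hf x) (fg x).
Qed.

Lemma integral_itv_ind (K l r : R) : 0 <= K ->
  (\int[mu]_(t in setT) (K * itv_ind l r t)%:E = (K * itv_len l r)%:E)%E.
Proof.
move=> K0; under eq_integral do rewrite itv_indE EFinM.
have ind_ge0 t : setT t -> (0 <= (\1_(`[l, r[%classic) t)%:E :> \bar R)%E.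
  by move=> _; rewrite lee_fin.
have ind_meas : measurable_fun setT (fun t => (\1_(`[l, r[%classic) t)%:E : \bar R).
  by apply/measurable_EFinP; exact: measurable_indic.
rewrite ge0_integralZl_EFin // integral_indic // setIT.
have := lebesgue_measure_itv `[l, r[; rewrite /= lte_fin => ->; rewrite /itv_len.
case: ltP => lr; last by rewrite max_r ?mulr0 ?mule0 // subr_le0.
by rewrite -EFinB -EFinM max_l // subr_ge0 ltW.
Qed.

Lemma integral_sum_itv_ind (I : Type) (s : seq I) (K l r : I -> R) :
  (forall j, 0 <= K j) ->
  (\int[mu]_(t in setT) (\sum_(j <- s) K j * itv_ind (l j) (r j) t)%:E =
   (\sum_(j <- s) K j * itv_len (l j) (r j))%:E)%E.
Proof.
move=> K0; under eq_integral do rewrite -sumEFin.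
rewrite ge0_integral_sum //; last first.
- by move=> j t _; rewrite lee_fin mulr_ge0 // itv_ind_ge0.
- move=> j; apply/measurable_EFinP; under eq_fun do rewrite itv_indE.
  by apply: measurable_funM => //; exact: measurable_indic.
by rewrite -sumEFin; apply: eq_bigr => j _; exact: integral_itv_ind.
Qed.

Lemma iter_int_ge0 m (f : (nat -> R) -> \bar R) :
  (forall y, (0 <= f y)%E) -> forall x, (0 <= iter_int m f x)%E.
Proof.
move=> f0; elim: m => [|m IH] x /=; first exact: f0.
by apply: integral_ge0 => t _; exact: IH.
Qed.

Lemma le_iter_int m (f g : (nat -> R) -> \bar R) :
  (forall y, (0 <= f y)%E) -> (forall y, (f y <= g y)%E) ->
  forall x, (iter_int m f x <= iter_int m g x)%E.
Proof.
move=> f0 fg; elim: m => [|m IH] x /=; first exact: fg.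
by apply: ge0_le_integralT => t; [exact: iter_int_ge0 | exact: IH].
Qed.

(* A box is given by the endpoints of its half-open sides [(B i).1, (B i).2). *)
Definition box := nat -> R * R.

Definition in_box n (B : box) (x : nat -> R) : bool :=
  [forall i : 'I_n, ((B i).1 <= x i) && (x i < (B i).2)].

Definition box_ind m n (B : box) (x : nat -> R) : R :=
  \prod_(i < n | (m <= i)%N) itv_ind (B i).1 (B i).2 (x i).

Definition box_vol n (B : box) : R := \prod_(i < n) itv_len (B i).1 (B i).2.

Definition box_shift (B : box) (v : nat -> R) : box :=
  fun i => ((B i).1 + v i, (B i).2 + v i).

Lemma in_box_shift n B v y :
  in_box n (box_shift B v) y = in_box n B (fun i => y i - v i).
Proof. by apply: eq_forallb => i; rewrite /= lerBrDr ltrBlDr. Qed.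

Lemma box_vol_shift n B v : box_vol n (box_shift B v) = box_vol n B.
Proof. by apply: eq_bigr => i _; rewrite /itv_len /= opprD addrACA subrr addr0. Qed.

Lemma box_ind_ge0 m n B x : 0 <= box_ind m n B x.
Proof. by apply: prodr_ge0 => i _; exact: itv_ind_ge0. Qed.

Lemma box_vol_ge0 n B : 0 <= box_vol n B.
Proof. by apply: prodr_ge0 => i _; exact: itv_len_ge0. Qed.

Lemma box_indnn n B x : box_ind n n B x = 1.
Proof. by apply: big1 => i; rewrite leqNgt ltn_ord. Qed.

Lemma box_ind0 n B x :
  box_ind 0 n B x = \prod_(i < n) itv_ind (B i).1 (B i).2 (x i).
Proof. exact: eq_bigl. Qed.

Lemma box_ind0E n B x : box_ind 0 n B x = (in_box n B x)%:R.
Proof.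
rewrite box_ind0 /in_box.
case: (boolP [forall _, _]) => [/forallP inB|/forallPn [i Bi]].
  by apply: big1 => i _; rewrite /itv_ind inB.
by rewrite (bigD1 i) //= /itv_ind (negbTE Bi) mul0r.
Qed.

Lemma box_ind0S n B x :
  box_ind 0 n.+1 B x = box_ind 0 n B x * itv_ind (B n).1 (B n).2 (x n).
Proof. by rewrite !box_ind0 big_ord_recr. Qed.

Lemma box_ind_upd m n B x t : (m < n)%N ->
  box_ind m n B (upd x m t) = itv_ind (B m).1 (B m).2 t * box_ind m.+1 n B x.
Proof.
move=> mn; rewrite /box_ind (bigD1 (Ordinal mn)) //= /upd eqxx; congr (_ * _).
apply: eq_big => [i|i /andP[_ im]]; first by rewrite ltn_neqAle andbC eq_sym.
by move: im; rewrite -val_eqE /= => /negbTE ->.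
Qed.

Lemma iter_int_sum_box_ind (s : seq box) n m : (m <= n)%N -> forall x,
  iter_int m (fun y => (\sum_(B <- s) box_ind 0 n B y)%:E) x =
  (\sum_(B <- s) box_vol m B * box_ind m n B x)%:E.
Proof.
elim: m => [|m IH] mn x /=.
  by congr (_%:E); apply: eq_bigr => B _; rewrite /box_vol big_ord0 mul1r.
transitivity (\int[mu]_(t in setT) (\sum_(B <- s)
   (box_vol m B * box_ind m.+1 n B x) * itv_ind (B m).1 (B m).2 t)%:E)%E.
  apply: eq_integral => t _; rewrite IH ?(ltnW mn) //; congr (_%:E).
  by apply: eq_bigr => B _; rewrite box_ind_upd // mulrA mulrAC.
rewrite integral_sum_itv_ind; last by move=> B; rewrite mulr_ge0 ?box_vol_ge0 ?box_ind_ge0.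
by congr (_%:E); apply: eq_bigr => B _; rewrite /box_vol big_ord_recr /= mulrAC.
Qed.

Lemma iter_int_box_sum n (s : seq box) x :
  iter_int n (fun y => (\sum_(B <- s) box_ind 0 n B y)%:E) x =
  (\sum_(B <- s) box_vol n B)%:E.
Proof.
rewrite iter_int_sum_box_ind //; congr (_%:E).
by apply: eq_bigr => B _; rewrite box_indnn mulr1.
Qed.

Lemma has_in_box_sum n (s : seq box) y :
  \sum_(B <- s) box_ind 0 n B y != 0 -> has (in_box n ^~ y) s.
Proof.
apply: contraR => /hasPn yNs; rewrite big_seq big1 // => B /yNs.
by rewrite box_ind0E => /negbTE ->.
Qed.

Lemma lebesgue_k_le_box_cover n (S : set (nat -> R)) (s : seq box) :
  (forall y, S y -> has (in_box n ^~ y) s) ->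
  (lebesgue_k n S <= (\sum_(B <- s) box_vol n B)%:E)%E.
Proof.
move=> cover; rewrite /lebesgue_k -(iter_int_box_sum n s (fun=> 0)).
apply: le_iter_int => y; first by rewrite lee_fin indicE ler0n.
rewrite lee_fin indicE; case: (boolP (y \in S)) => [/set_mem/cover/hasP [B sB yB]|_].
  by rewrite (big_rem B) //= box_ind0E yB lerDl sumr_ge0 // => C _; exact: box_ind_ge0.
by apply: sumr_ge0 => B _; exact: box_ind_ge0.
Qed.

Lemma lebesgue_k_box_sum n (S : set (nat -> R)) (s : seq box) :
  (forall y, (y \in S)%:R = \sum_(B <- s) box_ind 0 n B y) ->
  lebesgue_k n S = (\sum_(B <- s) box_vol n B)%:E.
Proof.
move=> SE; rewrite /lebesgue_k -(iter_int_box_sum n s (fun=> 0)); congr iter_int.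
by apply: funext => y; rewrite indicE SE.
Qed.

End Boxes.

Section BoxDecomposition.
Variable R : realType.
Implicit Types (B C : box R) (x : nat -> R) (l r t : R).

Definition is_box_sum n (f : (nat -> R) -> R) :=
  exists Q : seq (box R), forall x, f x = \sum_(B <- Q) box_ind 0 n B x.

Lemma is_box_sum_box n B : is_box_sum n (fun x => (in_box n B x)%:R).
Proof. by exists [:: B] => x; rewrite big_seq1 box_ind0E. Qed.

Lemma eq_is_box_sum n (f g : (nat -> R) -> R) :
  f =1 g -> is_box_sum n f -> is_box_sum n g.
Proof. by move=> fg [Q fQ]; exists Q => x; rewrite -fg. Qed.

Lemma is_box_sumD n (f g : (nat -> R) -> R) :
  is_box_sum n f -> is_box_sum n g -> is_box_sum n (fun x => f x + g x).
Proof. by move=> [Q fQ] [Q' gQ']; exists (Q ++ Q') => x; rewrite big_cat fQ gQ'. Qed.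

Lemma is_box_sum_big n (I : Type) (s : seq I) (F : I -> (nat -> R) -> R) :
  (forall i, is_box_sum n (F i)) -> is_box_sum n (fun x => \sum_(i <- s) F i x).
Proof.
move=> FQ; elim: s => [|i s IH]; first by exists [::] => x; rewrite !big_nil.
by apply: eq_is_box_sum (is_box_sumD (FQ i) IH) => x; rewrite big_cons.
Qed.

Definition set_side B n (I : R * R) : box R := fun i => if i == n then I else B i.

Lemma is_box_sum_extend n (f : (nat -> R) -> R) l r :
  is_box_sum n f -> is_box_sum n.+1 (fun x => f x * itv_ind l r (x n)).
Proof.
move=> [Q fQ]; exists [seq set_side B n (l, r) | B <- Q] => x.
rewrite big_map fQ big_distrl; apply: eq_bigr => B _.
rewrite box_ind0S /set_side eqxx !box_ind0; congr (_ * _).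
by apply: eq_bigr => i _; rewrite ltn_eqF.
Qed.

Definition box_meet B C : box R :=
  fun i => (Num.max (B i).1 (C i).1, Num.min (B i).2 (C i).2).

Lemma box_ind_meet n B C x :
  box_ind 0 n (box_meet B C) x = box_ind 0 n B x * box_ind 0 n C x.
Proof.
rewrite !box_ind0 -big_split; apply: eq_bigr => i _.
rewrite /itv_ind /box_meet /= ge_max lt_min.
by case: (_ <= _); case: (_ <= _); case: (_ < _); case: (_ < _); rewrite ?mulr1 ?mulr0.
Qed.

Lemma natr_andN (a c : bool) : (a && ~~ c)%:R = a%:R * (1 - c%:R) :> R.
Proof. by case: a; case: c; rewrite ?mul0r ?mul1r ?subrr ?subr0. Qed.

Lemma itv_ind_diff (l1 r1 l2 r2 t : R) : itv_ind l1 r1 t * (1 - itv_ind l2 r2 t) =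
  itv_ind l1 (Num.min r1 l2) t + itv_ind (Num.max l1 (Num.max r2 l2)) r1 t.
Proof.
rewrite /itv_ind lt_min !ge_max; case: (leP l2 t); case: (leP r2 t);
 case: (l1 <= t); case: (t < r1); rewrite /= ?(mul1r, mul0r, subrr, subr0, addr0, add0r) //.
Qed.

(* In dimension n+1, B \ C is (B' \ C') x B_n together with (B' /\ C') x (B_n \ C_n),
   and B_n \ C_n is a union of two disjoint intervals. *)
Lemma is_box_sum_diff n B C :
  is_box_sum n (fun x => (in_box n B x && ~~ in_box n C x)%:R).
Proof.
elim: n => [|n IH].
  exists [::] => x; rewrite big_nil.
  suff -> : in_box 0 C x by rewrite andbF.
  by apply/forallP; case.
apply: eq_is_box_sum (is_box_sumD (is_box_sum_extend (B n).1 (B n).2 IH)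
  (is_box_sumD
    (is_box_sum_extend (B n).1 (Num.min (B n).2 (C n).1) (is_box_sum_box n (box_meet B C)))
    (is_box_sum_extend (Num.max (B n).1 (Num.max (C n).2 (C n).1)) (B n).2
      (is_box_sum_box n (box_meet B C))))) => x.
rewrite [RHS]natr_andN -!box_ind0E !box_ind0S box_ind_meet -mulrDr -itv_ind_diff.
rewrite natr_andN -!box_ind0E.
ring.
Qed.

Lemma is_box_sum_diff_box n (S : (nat -> R) -> bool) C :
  is_box_sum n (fun x => (S x)%:R) ->
  is_box_sum n (fun x => (S x && ~~ in_box n C x)%:R).
Proof.
move=> [Q SQ]; apply: eq_is_box_sum (is_box_sum_big Q (fun B => is_box_sum_diff n B C)) => x.
by rewrite natr_andN SQ big_distrl; apply: eq_bigr => B _; rewrite natr_andN box_ind0E.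
Qed.

Lemma is_box_sum_diff_union n (S : (nat -> R) -> bool) (L : seq (box R)) :
  is_box_sum n (fun x => (S x)%:R) ->
  is_box_sum n (fun x => (S x && ~~ has (in_box n ^~ x) L)%:R).
Proof.
elim: L S => [|C L IH] S SQ; first by apply: eq_is_box_sum SQ => x; rewrite andbT.
apply: eq_is_box_sum (IH _ (is_box_sum_diff_box C SQ)) => x.
by rewrite /= negb_or andbA.
Qed.

Lemma is_box_sum_union n (L : seq (box R)) :
  is_box_sum n (fun x => (has (in_box n ^~ x) L)%:R).
Proof.
elim: L => [|B L IH]; first by exists [::] => x; rewrite big_nil.
apply: eq_is_box_sum (is_box_sumD IH (is_box_sum_diff_union L (is_box_sum_box n B))) => x.
by rewrite /=; case: (in_box n B x); case: (has _ L); rewrite ?addr0 ?add0r.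
Qed.

End BoxDecomposition.

Lemma partn_prod (I : finType) (P : pred I) (g : I -> nat) (pi : nat_pred) :
  (forall i, 0 < g i)%N -> ((\prod_(i | P i) g i)`_pi = \prod_(i | P i) (g i)`_pi)%N.
Proof.
move=> g0; suff [] : ((0 < \prod_(i | P i) g i) /\
    (\prod_(i | P i) g i)`_pi = \prod_(i | P i) (g i)`_pi)%N by [].
elim/big_rec2: _ => [|i n m _ [n0 <-]]; first by rewrite partn1.
by rewrite muln_gt0 g0 partnM.
Qed.

Lemma ln_prod (R : realType) (I : finType) (P : pred I) (f : I -> R) :
  (forall i, 0 < f i) -> ln (\prod_(i | P i) f i) = \sum_(i | P i) ln (f i).
Proof.
move=> f0; suff [] : 0 < \prod_(i | P i) f i /\
    ln (\prod_(i | P i) f i) = \sum_(i | P i) ln (f i) by [].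
elim/big_rec2: _ => [|i s p _ [p0 <-]]; first by rewrite ln1 ltr01.
by rewrite mulr_gt0 // lnM ?posrE.
Qed.

Lemma ln_half (R : realType) (n : nat) : (0 < n)%N -> ln (n%:R / 2 : R) = ln n%:R - ln 2.
Proof. by move=> n0; rewrite ln_div ?posrE ?ltr0n. Qed.

Section DivisorBoxes.
Variables (R : realType) (k : nat).
Implicit Types (a b d e f g : 'I_k -> nat) (x y : nat -> R).

Definition prefix_prod g (i : 'I_k) : nat := (\prod_(j < k | (j <= i)%N) g j)%N.

Lemma prefix_prod_gt0 g i : (forall j, 0 < g j)%N -> (0 < prefix_prod g i)%N.
Proof. by move=> g0; rewrite prodn_gt0. Qed.

Lemma dvdn_prefix_prod g i : (g i %| prefix_prod g i)%N.
Proof. by rewrite /prefix_prod (bigD1 i) //= dvdn_mulr. Qed.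

Lemma prefix_prod_dvd g i : (prefix_prod g i %| \prod_(j < k) g j)%N.
Proof. by rewrite (bigID (fun j : 'I_k => (j <= i)%N)) /= dvdn_mulr. Qed.

Lemma divcond_le_prefix a d i :
  (forall j, 0 < a j)%N -> divcond a d -> (d i <= prefix_prod a i)%N.
Proof.
move=> a0 [d0 dd]; apply: (@leq_trans (prefix_prod d i)).
  by apply: dvdn_leq; [exact: prefix_prod_gt0 | exact: dvdn_prefix_prod].
by apply: dvdn_leq; [exact: prefix_prod_gt0 | exact: dd].
Qed.

Lemma divcond_le_prod a d i :
  (forall j, 0 < a j)%N -> divcond a d -> (d i <= \prod_(j < k) a j)%N.
Proof.
move=> a0 ad; apply: leq_trans (divcond_le_prefix i a0 ad) _.
by apply: dvdn_leq; [rewrite prodn_gt0 | exact: prefix_prod_dvd].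
Qed.

Local Notation tuple_of a := {ffun 'I_k -> 'I_(\prod_(j < k) a j)%N.+1}.

Definition admissible a : set (tuple_of a) :=
  [set t : tuple_of a | `[< divcond a (fun i => nat_of_ord (t i)) >] ].
Arguments admissible : clear implicits.

Lemma in_admissible a (t : tuple_of a) :
  reflect (divcond a (fun i => nat_of_ord (t i))) (t \in admissible a).
Proof. by apply: (iffP idP) => [/set_mem/asboolP|/asboolP/mem_set]. Qed.

Lemma divcond_admissible a d : (forall j, 0 < a j)%N -> divcond a d ->
  exists2 dd, dd \in admissible a & (fun i => nat_of_ord (dd i)) = d.
Proof.
move=> a0 ad.
pose dd : tuple_of a := [ffun i => inord (d i)].
have ddE : (fun i => nat_of_ord (dd i)) = d.
  by apply: funext => i; rewrite ffunE inordK // ltnS divcond_le_prod.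
by exists dd => //; apply/in_admissible; rewrite ddE.
Qed.

Lemma divcond_coprime_split a b d :
  (forall i, 0 < a i)%N -> (forall i, 0 < b i)%N ->
  coprime (\prod_(i < k) a i) (\prod_(i < k) b i) ->
  divcond (fun i => a i * b i)%N d ->
  exists e f, [/\ divcond a e, divcond b f & forall i, d i = (e i * f i)%N].
Proof.
move=> a0 b0 cop [d0 dab].
set pi := \pi(\prod_(i < k) a i)%N.
have pi_a i : pi.-nat (prefix_prod a i).
  by apply: pnat_dvd (prefix_prod_dvd a i) (pnat_pi _); rewrite prodn_gt0.
have pi'_b i : (negn pi).-nat (prefix_prod b i).
  by apply: pnat_dvd (prefix_prod_dvd b i) _; rewrite -coprime_pi'// prodn_gt0.
have ab0 i : (0 < prefix_prod a i * prefix_prod b i)%N.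
  by rewrite muln_gt0 !prefix_prod_gt0.
have d_ab i : (prefix_prod d i %| prefix_prod a i * prefix_prod b i)%N.
  by have := dab i; rewrite big_split.
exists (fun i => (d i)`_pi)%N, (fun i => (d i)`_(negn pi))%N; split => [||i]; last by rewrite partnC.
- split => [i|i]; first exact: part_gt0.
  have := partn_dvd pi (ab0 i) (d_ab i); rewrite partn_prod // partnM ?prefix_prod_gt0 //.
  by rewrite (part_pnat_id (pi_a i)) (part_p'nat (pi'_b i)) muln1.
- split => [i|i]; first exact: part_gt0.
  have := partn_dvd (negn pi) (ab0 i) (d_ab i); rewrite partn_prod // partnM ?prefix_prod_gt0 //.
  by rewrite (part_pnat_id (pi'_b i)) (part_p'nat (etrans (pnatNK _ _) (pi_a i))) mul1n.
Qed.

Definition log_vec d : nat -> R :=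
  fun i => if insub i is Some o then ln (d o)%:R else 0.

Definition log_box d : box R := fun i => (log_vec d i - ln 2, log_vec d i).

Lemma log_vecE d (i : 'I_k) : log_vec d i = ln (d i)%:R.
Proof. by rewrite /log_vec valK. Qed.

Lemma box_vol_log_box d : box_vol k (log_box d) = ln 2 ^+ k.
Proof.
rewrite /box_vol (eq_bigr (fun=> ln 2)) ?prodr_const ?card_ord // => i _.
by rewrite /itv_len /= opprB addrC subrK max_l // ln_ge0 // ler1n.
Qed.

Lemma LsetE a x : Lset R a x <-> exists d, divcond a d /\ in_box k (log_box d) x.
Proof.
split=> -[d [ad xd]]; exists d; split=> //.
  by apply/forallP => i; rewrite /= log_vecE -ln_half ?(ad.1 i) //; exact: xd.
by move=> i; have := forallP xd i; rewrite /= log_vecE -ln_half ?(ad.1 i).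
Qed.

Definition admissible_boxes a : seq (box R) :=
  [seq log_box (fun i => nat_of_ord (t i)) | t : tuple_of a <- enum (admissible a)].

Lemma Lset_boxesE a x : (forall i, 0 < a i)%N ->
  (x \in Lset R a) = has (in_box k ^~ x) (admissible_boxes a).
Proof.
move=> a0; apply/idP/idP.
  move=> /set_mem /LsetE [d [ad xd]]; have [dd ddA ddE] := divcond_admissible a0 ad.
  by apply/hasP; exists (log_box d) => //; apply/mapP; exists dd; rewrite ?mem_enum ?ddE.
move=> /hasP [B /mapP [dd + ->] xd]; rewrite mem_enum => /in_admissible ad.
by apply: mem_set; apply/LsetE; exists (fun i => nat_of_ord (dd i)).
Qed.

Lemma Lk_le_tau a : (forall i, 0 < a i)%N ->
  (Lk R a <= ((tau a)%:R * ln 2 ^+ k)%:E)%E.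
Proof.
move=> a0; apply: le_trans (lebesgue_k_le_box_cover (s := admissible_boxes a) _) _.
  by move=> y /mem_set; rewrite Lset_boxesE.
rewrite lee_fin big_map big_enum /= (eq_bigr (fun=> ln 2 ^+ k)) => [|d _].
  by rewrite sumr_const [leRHS]mulr_natl.
exact: box_vol_log_box.
Qed.

(* Every box [log(d_i/2), log d_i) lies in [-log 2, log(a_1 ... a_i)). *)
Lemma Lk_le_prod_log a : (forall i, 0 < a i)%N ->
  (Lk R a <= (\prod_(i < k) (\sum_(j < k | (j <= i)%N) ln ((a j)%:R : R) + ln 2))%:E)%E.
Proof.
move=> a0; pose S (i : nat) := \sum_(j < k | (j <= i)%N) ln ((a j)%:R : R).
have S_ge0 i : 0 <= S i by apply: sumr_ge0 => j _; rewrite ln_ge0 // ler1n.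
apply: le_trans (lebesgue_k_le_box_cover (s := [:: fun i => (- ln 2, S i)]) _) _.
  move=> y /LsetE [d [[d0 dd] /forallP yd]]; rewrite /= orbF; apply/forallP => i /=.
  have /andP [dy yd'] := yd i; rewrite /= log_vecE in dy yd'.
  have ln_d_ge0 : 0 <= ln ((d i)%:R : R) by rewrite ln_ge0 // ler1n.
  have ln_d_le : ln ((d i)%:R : R) <= S i.
    rewrite /S -ln_prod => [|j]; last by rewrite ltr0n.
    by rewrite -natr_prod ler_ln ?posrE ?ltr0n ?prefix_prod_gt0 // ler_nat divcond_le_prefix.
  by apply/andP; split; lra.
rewrite big_seq1 lee_fin le_eqVlt; apply/orP; left; apply/eqP/eq_bigr => i _.
by rewrite /itv_len /= opprK max_l // addr_ge0 // ln_ge0 // ler1n.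
Qed.

(* With pi the primes of a_1 ... a_k, each admissible d for ab is e f with e = d_pi
   admissible for a and f = d_pi' admissible for b; hence L(ab) is covered by the
   translates by log e of a disjoint decomposition of L(b). *)
Lemma Lk_mul_coprime_le a b :
  (forall i, 0 < a i)%N -> (forall i, 0 < b i)%N ->
  coprime (\prod_(i < k) a i) (\prod_(i < k) b i) ->
  (Lk R (fun i => a i * b i)%N <= ((tau a)%:R : R)%:E * Lk R b)%E.
Proof.
move=> a0 b0 cop; have [Q LbQ] := is_box_sum_union k (admissible_boxes b).
have -> : Lk R b = (\sum_(B <- Q) box_vol k B)%:E.
  by apply: lebesgue_k_box_sum => y; rewrite Lset_boxesE.
pose shifts := [seq box_shift B (log_vec (fun i => nat_of_ord (t i)))
                | t : tuple_of a <- enum (admissible a), B <- Q].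
apply: le_trans (lebesgue_k_le_box_cover (s := shifts) _) _.
  move=> y /LsetE [d [abd yd]].
  have [e [f [ae bf def]]] := divcond_coprime_split a0 b0 cop abd.
  have [ee eeA eeE] := divcond_admissible a0 ae.
  pose y' i := y i - log_vec e i.
  have y'L : y' \in Lset R b.
    apply: mem_set; apply/LsetE; exists f; split=> //; apply/forallP => i /=.
    have /andP [] := forallP yd i; rewrite /y' /= !log_vecE def natrM.
    by rewrite lnM ?posrE ?ltr0n ?(ae.1 i) ?(bf.1 i) // => *; apply/andP; split; lra.
  have y'Q : has (in_box k ^~ y') Q.
    by apply: has_in_box_sum; rewrite -LbQ -Lset_boxesE // y'L pnatr_eq0.
  have [B BQ yB] := hasP y'Q; apply/hasP; exists (box_shift B (log_vec e)).
    by apply/allpairsP; exists (ee, B); rewrite mem_enum eeE.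
  by rewrite in_box_shift.
rewrite -EFinM lee_fin big_allpairs_dep /= big_enum /= le_eqVlt; apply/orP; left.
rewrite -sumr_const big_distrl /=; apply/eqP/eq_bigr => e _.
by rewrite mul1r; apply: eq_bigr => B _; rewrite box_vol_shift.
Qed.

End DivisorBoxes.

Theorem lemma2p1 (R : realType) (k : nat) :
  (forall a : 'I_k -> nat, (forall i, (0 < a i)%N) ->
     (Lk R a <= (Num.min ((tau a)%:R * ln (2 : R) ^+ k)
          (\prod_(i < k) (\sum_(j < k | (j <= i)%N) ln ((a j)%:R : R) + ln 2)))%:E)%E)
  /\
  (forall a b : 'I_k -> nat, (forall i, (0 < a i)%N) -> (forall i, (0 < b i)%N) ->
     coprime (\prod_(i < k) a i) (\prod_(i < k) b i) ->
     (Lk R (fun i => a i * b i)%N <= ((tau a)%:R : R)%:E * Lk R b)%E).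
Proof.
split; last exact: Lk_mul_coprime_le.
by move=> a a0; rewrite EFin_min le_min Lk_le_tau // Lk_le_prod_log.
Qed.
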